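(* Let $\mathcal{X}$ be a finite set with $|\mathcal{X}|=N$, let $\mathcal{P}$ be a distribution of natural samples, let $\mathcal{Y}_l$ be a finite label set with class-conditional distributions $\mathcal{P}_{l_i}$ ($i\in\mathcal{Y}_l$), and let $\mathcal{T}(\cdot\mid\bar x)$ be a probability distribution on $\mathcal{X}$ for every natural sample $\bar x$. Let $\eta_u,\eta_l>0$ and define the edge weights $$w_{xx'}=\eta_u\,\mathbb{E}_{\bar x\sim\mathcal{P}}\mathcal{T}(x\mid\bar x)\mathcal{T}(x'\mid\bar x)+\eta_l\sum_{i\in\mathcal{Y}_l}\mathbb{E}_{\bar x_l\sim\mathcal{P}_{l_i}}\mathbb{E}_{\bar x_l'\sim\mathcal{P}_{l_i}}\mathcal{T}(x\mid\bar x_l)\mathcal{T}(x'\mid\bar x_l'),$$ $w_x=\sum_{x'\in\mathcal{X}}w_{xx'}$ (assumed positive), the adjacency matrix $A=(w_{xx'})_{x,x'\in\mathcal{X}}$, $D=\mathrm{diag}(w_x)$ and $\tilde A=D^{-1/2}AD^{-1/2}$. For a function $f:\mathcal{X}\to\mathbb{R}^k$ let $F\in\mathbb{R}^{N\times k}$ be the matrix whose row indexed by $x$ is $\mathbf{f}_x^\top$ with $\mathbf{f}_x=\sqrt{w_x}f(x)$, and let $\mathcal{L}_{\mathrm{mf}}(F,A)=\|\tilde A-FF^\top\|_F^2$. Then minimizing $\mathcal{L}_{\mathrm{mf}}(F,A)$ is equivalent to minimizing over $f$ the loss $$\mathcal{L}_{\mathrm{SORL}}(f)=-2\eta_l\mathcal{L}_1(f)-2\eta_u\mathcal{L}_2(f)+\eta_l^2\mathcal{L}_3(f)+2\eta_l\eta_u\mathcal{L}_4(f)+\eta_u^2\mathcal{L}_5(f),$$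 in the sense that $\mathcal{L}_{\mathrm{mf}}(F,A)=\mathcal{L}_{\mathrm{SORL}}(f)+c$ for a constant $c$ not depending on $f$, where $\mathcal{L}_1(f)=\sum_{i\in\mathcal{Y}_l}\mathbb{E}_{\bar x_l,\bar x_l'\sim\mathcal{P}_{l_i},\,x\sim\mathcal{T}(\cdot\mid\bar x_l),\,x^+\sim\mathcal{T}(\cdot\mid\bar x_l')}[f(x)^\top f(x^+)]$, $\mathcal{L}_2(f)=\mathbb{E}_{\bar x_u\sim\mathcal{P},\,x,x^+\sim\mathcal{T}(\cdot\mid\bar x_u)}[f(x)^\top f(x^+)]$, $\mathcal{L}_3(f)=\sum_{i,j\in\mathcal{Y}_l}\mathbb{E}_{\bar x_l\sim\mathcal{P}_{l_i},\bar x_l'\sim\mathcal{P}_{l_j},\,x\sim\mathcal{T}(\cdot\mid\bar x_l),\,x^-\sim\mathcal{T}(\cdot\mid\bar x_l')}[(f(x)^\top f(x^-))^2]$, $\mathcal{L}_4(f)=\sum_{i\in\mathcal{Y}_l}\mathbb{E}_{\bar x_l\sim\mathcal{P}_{l_i},\bar x_u\sim\mathcal{P},\,x\sim\mathcal{T}(\cdot\mid\bar x_l),\,x^-\sim\mathcal{T}(\cdot\mid\bar x_u)}[(f(x)^\top f(x^-))^2]$, $\mathcal{L}_5(f)=\mathbb{E}_{\bar x_u,\bar x_u'\sim\mathcal{P},\,x\sim\mathcal{T}(\cdot\mid\bar x_u),\,x^-\sim\mathcal{T}(\cdot\mid\bar x_u')}[(f(x)^\top f(x^-))^2]$.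
   Context: Samples in the sums/expectations over $x\sim\mathcal{T}(\cdot\mid\bar x)$ range over the finite augmented sample space $\mathcal{X}$; independent draws are taken for distinct variables. The first term of $w_{xx'}$ is the self-supervised connectivity (two augmentations of the same natural sample) and the second the supervised connectivity (augmentations of two labeled samples of the same known class). *)

From HB Require Import structures.
From mathcomp Require Import all_boot all_order all_algebra.
Set Implicit Arguments. Unset Strict Implicit. Unset Printing Implicit Defensive.
Import Order.TTheory GRing.Theory Num.Theory.
Local Open Scope ring_scope.

Section SORL.
Variables (R : rcfType) (Xbar X Yl : finType).
Variables (P : Xbar -> R) (Pl : Yl -> Xbar -> R) (T : Xbar -> X -> R).
Variables (eta_u eta_l : R).

Definition is_distr (T0 : finType) (p : T0 -> R) :=
  (forall t, 0 <= p t) /\ \sum_t p t = 1.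

Definition expect (p : Xbar -> R) (g : Xbar -> R) := \sum_xb p xb * g xb.

Definition wedge (x x' : X) : R :=
  eta_u * expect P (fun xb => T xb x * T xb x')
  + eta_l * \sum_(i : Yl) expect (Pl i) (fun xb =>
                 expect (Pl i) (fun xb' => T xb x * T xb' x')).

Definition wdeg (x : X) : R := \sum_(x' : X) wedge x x'.

Definition adjA : 'M[R]_#|X| :=
  \matrix_(i, j) wedge (enum_val i) (enum_val j).

Definition Dinvsqrt : 'M[R]_#|X| :=
  diag_mx (\row_i (Num.sqrt (wdeg (enum_val i)))^-1).

Definition Atilde : 'M[R]_#|X| := Dinvsqrt *m adjA *m Dinvsqrt.

Variable k : nat.

Definition Fmat (f : X -> 'cV[R]_k) : 'M[R]_(#|X|, k) :=
  \matrix_(i, j) (Num.sqrt (wdeg (enum_val i)) * f (enum_val i) j 0).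

Definition frob2 (m n : nat) (M : 'M[R]_(m, n)) : R :=
  \sum_i \sum_j M i j ^+ 2.

Definition L_mf (F : 'M[R]_(#|X|, k)) : R := frob2 (Atilde - F *m F^T).

Definition dotf (f : X -> 'cV[R]_k) (x y : X) : R := ((f x)^T *m f y) 0 0.

Definition expT (xb : Xbar) (g : X -> R) := \sum_x T xb x * g x.

Definition L1 f := \sum_(i : Yl) expect (Pl i) (fun xb => expect (Pl i) (fun xb' =>
   expT xb (fun x => expT xb' (fun xp => dotf f x xp)))).
Definition L2 f := expect P (fun xb =>
   expT xb (fun x => expT xb (fun xp => dotf f x xp))).
Definition L3 f := \sum_(i : Yl) \sum_(j : Yl) expect (Pl i) (fun xb =>
   expect (Pl j) (fun xb' =>
   expT xb (fun x => expT xb' (fun xn => dotf f x xn ^+ 2)))).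
Definition L4 f := \sum_(i : Yl) expect (Pl i) (fun xb => expect P (fun xb' =>
   expT xb (fun x => expT xb' (fun xn => dotf f x xn ^+ 2)))).
Definition L5 f := expect P (fun xb => expect P (fun xb' =>
   expT xb (fun x => expT xb' (fun xn => dotf f x xn ^+ 2)))).

Definition L_SORL f :=
  - (2 * eta_l * L1 f) - 2 * eta_u * L2 f + eta_l ^+ 2 * L3 f
  + 2 * eta_l * eta_u * L4 f + eta_u ^+ 2 * L5 f.

End SORL.

From HB Require Import structures.
From mathcomp Require Import all_boot all_order all_algebra.
From mathcomp Require Import ring.
Import Order.TTheory GRing.Theory Num.Theory.
Set Implicit Arguments. Unset Strict Implicit.
Local Open Scope ring_scope.

(* Entrywise, the sqrt(w_x) factors of F cancel those of D^{-1/2}, so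
   |A~ - F F^T|^2 = |A~|^2 - 2 sum w_xx' f(x)^T f(x') + sum w_x w_x' (f(x)^T f(x'))^2.
   The edge weight w_xx' is a combination of products of augmentation
   probabilities, which turns the linear term into L1 and L2.  The degree w_x
   is the probability of x under the augmentation of the mixture
   eta_u P + eta_l sum_i P_li, so the quadratic term is a double expectation
   over that mixture and splits into L3, L4 and L5. *)

Lemma exchange_wsum (R : comNzRingType) (I J : finType) (u : I -> R) (v : J -> R)
    (G : I -> J -> R) :
  \sum_i u i * \sum_j v j * G i j = \sum_j v j * \sum_i u i * G i j.
Proof.
under eq_bigr do rewrite mulr_sumr; rewrite exchange_big.
by apply: eq_bigr => j _; rewrite mulr_sumr; apply: eq_bigr => i _; rewrite mulrCA.
Qed.

Section Expectation.
Variables (R : rcfType) (Xbar : finType).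
Implicit Types (p q g h : Xbar -> R).

Lemma eq_expect p g h : (forall b, g b = h b) -> expect p g = expect p h.
Proof. by move=> gh; apply: eq_bigr => b _; rewrite gh. Qed.

Lemma expectD p g h : expect p (fun b => g b + h b) = expect p g + expect p h.
Proof. by rewrite /expect -big_split; apply: eq_bigr => b _; rewrite mulrDr. Qed.

Lemma expectZ p c g : expect p (fun b => c * g b) = c * expect p g.
Proof. by rewrite /expect mulr_sumr; apply: eq_bigr => b _; rewrite mulrCA. Qed.

Lemma expectMr p g c : expect p g * c = expect p (fun b => g b * c).
Proof. by rewrite /expect mulr_suml; apply: eq_bigr => b _; rewrite mulrA. Qed.

Lemma expect_sum (I : finType) p (F : I -> Xbar -> R) :
  expect p (fun b => \sum_i F i b) = \sum_i expect p (F i).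
Proof. by rewrite /expect; under eq_bigr do rewrite mulr_sumr; rewrite exchange_big. Qed.

Lemma expect_mul p q g h :
  expect p g * expect q h = expect p (fun b => expect q (fun b' => g b * h b')).
Proof. by rewrite expectMr; apply: eq_expect => b; rewrite expectZ. Qed.

Lemma expect_measureD c d p q g :
  expect (fun b => c * p b + d * q b) g = c * expect p g + d * expect q g.
Proof.
rewrite /expect 2!mulr_sumr -big_split; apply: eq_bigr => b _ /=.
by rewrite mulrDl !mulrA.
Qed.

Lemma expect_measure_sum (I : finType) (F : I -> Xbar -> R) g :
  expect (fun b => \sum_i F i b) g = \sum_i expect (F i) g.
Proof. by rewrite /expect; under eq_bigr do rewrite mulr_suml; rewrite exchange_big. Qed.

End Expectation.

Section Augmentation.
Variables (R : rcfType) (Xbar X : finType) (T : Xbar -> X -> R).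
Implicit Types (p q : Xbar -> R).

Definition aug p (x : X) : R := expect p (fun b => T b x).

Lemma sum_aug p : (forall b, \sum_x T b x = 1) -> \sum_x aug p x = \sum_b p b.
Proof.
move=> T1; rewrite -expect_sum; apply: eq_bigr => b _.
by rewrite T1 mulr1.
Qed.

Lemma sum_aug_mul p (g : X -> R) :
  \sum_x aug p x * g x = expect p (fun b => expT T b g).
Proof. by under eq_bigr do rewrite expectMr; rewrite -expect_sum. Qed.

Lemma sum2_aug_mul p q (h : X -> X -> R) :
  \sum_x \sum_y aug p x * aug q y * h x y
  = expect p (fun b => expect q (fun b' => expT T b (fun x => expT T b' (h x)))).
Proof.
under eq_bigr => x _.
  under eq_bigr do rewrite -mulrA.
  rewrite -mulr_sumr sum_aug_mul.
  over.
rewrite sum_aug_mul; apply: eq_expect => b.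
exact: exchange_wsum.
Qed.

Lemma sum2_joint_mul p (h : X -> X -> R) :
  \sum_x \sum_y expect p (fun b => T b x * T b y) * h x y
  = expect p (fun b => expT T b (fun x => expT T b (h x))).
Proof.
under eq_bigr => x _.
  under eq_bigr do rewrite expectMr.
  rewrite -expect_sum.
  over.
rewrite -expect_sum; apply: eq_expect => b; apply: eq_bigr => x _.
by rewrite /expT mulr_sumr; apply: eq_bigr => y _; rewrite mulrA.
Qed.

End Augmentation.

Lemma dotfC (R : rcfType) (X : finType) k (f : X -> 'cV[R]_k) x y :
  dotf f x y = dotf f y x.
Proof. by rewrite /dotf !mxE; apply: eq_bigr => i _; rewrite !mxE mulrC. Qed.

Section SpectralLoss.
Variables (R : rcfType) (Xbar X Yl : finType).
Variables (P : Xbar -> R) (Pl : Yl -> Xbar -> R) (T : Xbar -> X -> R).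
Variables (eta_u eta_l : R).
Hypothesis Pl_sum1 : forall i, \sum_b Pl i b = 1.
Hypothesis T_sum1 : forall b, \sum_x T b x = 1.

Local Notation W := (wedge P Pl T eta_u eta_l).
Local Notation deg := (wdeg P Pl T eta_u eta_l).

Definition labeled b := \sum_i Pl i b.
Definition mixture b := eta_u * P b + eta_l * labeled b.

Lemma wedgeE x y : W x y = eta_u * expect P (fun b => T b x * T b y)
  + eta_l * \sum_i aug T (Pl i) x * aug T (Pl i) y.
Proof. by rewrite /wedge; under [in RHS]eq_bigr do rewrite expect_mul. Qed.

Lemma wdeg_aug x : deg x = aug T mixture x.
Proof.
rewrite /wdeg; under eq_bigr do rewrite wedgeE.
rewrite big_split -!mulr_sumr /aug expect_measureD expect_measure_sum.
congr (_ * _ + _ * _).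
  rewrite -expect_sum; apply: eq_expect => b.
  by rewrite -mulr_sumr T_sum1 mulr1.
rewrite exchange_big; apply: eq_bigr => i _.
by rewrite -mulr_sumr sum_aug // Pl_sum1 mulr1.
Qed.

Variable k : nat.
Implicit Type f : X -> 'cV[R]_k.

Lemma sum_wedge_dotf f :
  \sum_x \sum_y W x y * dotf f x y = eta_l * L1 Pl T f + eta_u * L2 P T f.
Proof.
under eq_bigr => x _ do under eq_bigr => y _ do rewrite wedgeE mulrDl -!mulrA.
under eq_bigr do rewrite big_split -!mulr_sumr.
rewrite big_split -!mulr_sumr sum2_joint_mul addrC; congr (_ * _ + _ * _).
under eq_bigr do under eq_bigr do rewrite mulr_suml.
under eq_bigr do rewrite exchange_big.
rewrite /L1 exchange_big; apply: eq_bigr => i _.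
exact: sum2_aug_mul.
Qed.

Lemma sum_wdeg_dotf2 f :
  \sum_x \sum_y deg x * deg y * dotf f x y ^+ 2
  = eta_l ^+ 2 * L3 Pl T f + 2 * eta_l * eta_u * L4 P Pl T f
    + eta_u ^+ 2 * L5 P T f.
Proof.
under eq_bigr => x _ do under eq_bigr => y _ do rewrite !wdeg_aug.
rewrite sum2_aug_mul.
set H := fun b b' => expT T b (fun x => expT T b' (fun y => dotf f x y ^+ 2)).
have HC b b' : H b b' = H b' b.
  rewrite /H /expT (exchange_wsum (T b) (T b') (fun x y => dotf f x y ^+ 2)).
  by apply: eq_bigr => y _; congr (_ * _); apply: eq_bigr => x _; rewrite dotfC.
have L3E : L3 Pl T f = expect labeled (fun b => expect labeled (H b)).
  rewrite expect_measure_sum; apply: eq_bigr => i _.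
  by rewrite -expect_sum; apply: eq_expect => b; rewrite expect_measure_sum.
have L4E : L4 P Pl T f = expect labeled (fun b => expect P (H b)).
  by rewrite expect_measure_sum.
have L4C : expect P (fun b => expect labeled (H b)) = L4 P Pl T f.
  rewrite L4E /expect exchange_wsum; apply: eq_bigr => b _; congr (_ * _).
  by apply: eq_bigr => b' _; rewrite HC.
under eq_expect do rewrite expect_measureD.
rewrite expect_measureD !expectD !expectZ -L3E -L4E L4C /L5.
ring.
Qed.

Lemma L_SORL_sumE f :
  L_SORL P Pl T eta_u eta_l f
  = \sum_x \sum_y (deg x * deg y * dotf f x y ^+ 2 - 2 * (W x y * dotf f x y)).
Proof.
under [RHS]eq_bigr do rewrite big_split /= sumrN -mulr_sumr.
rewrite big_split /= sumrN -mulr_sumr sum_wdeg_dotf2 sum_wedge_dotf /L_SORL.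
ring.
Qed.

End SpectralLoss.

Lemma sqr_scaled_diff (F : fieldType) (s t w d : F) : s != 0 -> t != 0 ->
  (s^-1 * w * t^-1 - s * t * d) ^+ 2
  = s ^+ 2 * t ^+ 2 * d ^+ 2 - 2 * (w * d) + (s^-1 * w * t^-1) ^+ 2.
Proof. by move=> s0 t0; field; rewrite s0 t0. Qed.

Section MatrixForm.
Variables (R : rcfType) (Xbar X Yl : finType).
Variables (P : Xbar -> R) (Pl : Yl -> Xbar -> R) (T : Xbar -> X -> R).
Variables (eta_u eta_l : R) (k : nat).
Hypothesis wdeg_gt0 : forall x, 0 < wdeg P Pl T eta_u eta_l x.

Local Notation W := (wedge P Pl T eta_u eta_l).
Local Notation deg := (wdeg P Pl T eta_u eta_l).
Local Notation s x := (Num.sqrt (deg x)).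

Lemma frob2_enum_rank (M : 'M[R]_#|X|) :
  frob2 M = \sum_x \sum_y M (enum_rank x) (enum_rank y) ^+ 2.
Proof.
rewrite /frob2 [RHS]big_enum_val; apply: eq_bigr => i _.
by rewrite [RHS]big_enum_val; apply: eq_bigr => j _; rewrite !enum_valK.
Qed.

Lemma Atilde_enum_rank x y :
  Atilde P Pl T eta_u eta_l (enum_rank x) (enum_rank y) = (s x)^-1 * W x y * (s y)^-1.
Proof. by rewrite /Atilde /Dinvsqrt mul_mx_diag mul_diag_mx !mxE !enum_rankK. Qed.

Lemma Fmat_mul_tr_enum_rank (f : X -> 'cV[R]_k) x y :
  (Fmat P Pl T eta_u eta_l f *m (Fmat P Pl T eta_u eta_l f)^T) (enum_rank x) (enum_rank y)
  = s x * s y * dotf f x y.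
Proof.
rewrite !mxE /dotf !mxE mulr_sumr; apply: eq_bigr => l _.
by rewrite !mxE !enum_rankK; ring.
Qed.

Lemma L_mf_FmatE (f : X -> 'cV[R]_k) :
  L_mf P Pl T eta_u eta_l (Fmat P Pl T eta_u eta_l f)
  = \sum_x \sum_y (deg x * deg y * dotf f x y ^+ 2 - 2 * (W x y * dotf f x y))
    + frob2 (Atilde P Pl T eta_u eta_l).
Proof.
have s_neq0 x : s x != 0 by rewrite gt_eqF ?sqrtr_gt0.
rewrite /L_mf !frob2_enum_rank -big_split; apply: eq_bigr => x _.
rewrite -big_split; apply: eq_bigr => y _ /=.
rewrite mxE [X in _ + X]mxE Atilde_enum_rank Fmat_mul_tr_enum_rank.
rewrite sqr_scaled_diff //.
by rewrite !sqr_sqrtr ?ltW.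
Qed.

End MatrixForm.

Theorem theorem1 (R : rcfType) (Xbar X Yl : finType)
  (P : Xbar -> R) (Pl : Yl -> Xbar -> R) (T : Xbar -> X -> R)
  (eta_u eta_l : R) (k : nat) :
  0 < eta_u -> 0 < eta_l ->
  is_distr P -> (forall i, is_distr (Pl i)) -> (forall xb, is_distr (T xb)) ->
  (forall x, 0 < wdeg P Pl T eta_u eta_l x) ->
  exists c : R, forall f : X -> 'cV[R]_k,
    L_mf P Pl T eta_u eta_l (Fmat P Pl T eta_u eta_l f)
    = L_SORL P Pl T eta_u eta_l f + c.
Proof.
(* Only the normalisation of the P_li and of the T(.|xb) is used. *)
move=> _ _ _ Pl_distr T_distr wdeg_gt0.
exists (frob2 (Atilde P Pl T eta_u eta_l)) => f.
rewrite L_mf_FmatE // L_SORL_sumE //.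
- by move=> i; case: (Pl_distr i).
- by move=> b; case: (T_distr b).
Qed.
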